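(* Consider the planted $k$-factor model with $k$ fixed and $p=\lambda/n$, where $\lambda=\lambda_n$ may depend on $n$, and condition on any realization of $H^*$. (i) If $\lambda=o(1)$, then with probability $1-o(1)$ the planted graph $H^*$ is the unique $k$-factor contained in $G$. (ii) If $\lambda=\Omega(1)$ (i.e. $\lambda_n\ge c_0>0$ for all large $n$), then there is a constant $c>0$ such that for all large $n$, with probability at least $c$ the graph $G$ contains a $k$-factor $H\neq H^*$.
   Context: Planted $k$-factor model: fix an integer $k\ge1$ and $n$ with $kn$ even. A $k$-factor on $[n]$ is a $k$-regular simple graph with vertex set $[n]$, identified with its edge set; $\mathcal H$ is the set of all $k$-factors on $[n]$. Let $p=\lambda/n\in[0,1]$. Draw $H^*$ uniformly at random from $\mathcal H$ and, independently, $G_0\sim\mathcal G(n,p)$ (each of the $\binom n2$ vertex pairs is an edge independently with probability $p$). The observed graph is $G=G_0\cup H^*$ (union of edge sets). A $k$-factor $H$ is ''contained in $G$'' if $H\subseteq E(G)$. Asymptotics are as $n\to\infty$ with $k$ fixed. *)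

From mathcomp Require Import all_boot all_order all_algebra.
From mathcomp Require Import reals.
Set Implicit Arguments. Unset Strict Implicit. Unset Printing Implicit Defensive.
Import Order.TTheory GRing.Theory Num.Theory.
Local Open Scope ring_scope.

(* Vertex set [n] = 'I_n; an (undirected) vertex pair / potential edge is a
   2-element subset of 'I_n; a simple graph on [n] is identified with its
   edge set, a subset of [edges n]. *)
Definition edges (n : nat) : {set {set 'I_n}} := [set e : {set 'I_n} | #|e| == 2%N].

Definition is_kfactor (n k : nat) (H : {set {set 'I_n}}) : bool :=
  (H \subset edges n) && [forall v : 'I_n, #|[set e in H | v \in e]| == k].

Definition gnp_prob (R : realType) (n : nat) (p : R)
    (A : pred {set {set 'I_n}}) : R :=
  \sum_(S : {set {set 'I_n}} | (S \subset edges n) && A S)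
     p ^+ #|S| * (1 - p) ^+ (#|edges n| - #|S|).

(* Event (in terms of G0) that G = G0 ∪ Hs contains a k-factor H <> Hs. *)
Definition other_kfactor (n k : nat) (Hs : {set {set 'I_n}})
    (G0 : {set {set 'I_n}}) : bool :=
  [exists H : {set {set 'I_n}},
     [&& is_kfactor k H, H != Hs & H \subset G0 :|: Hs]].

From mathcomp Require Import all_boot all_order all_algebra.
From mathcomp Require Import reals.
From mathcomp Require Import ring lra zify.
Set Implicit Arguments. Unset Strict Implicit. Unset Printing Implicit Defensive.
Import Order.TTheory GRing.Theory Num.Theory.

(* (i) First moment. A k-factor H <> Hs drops a nonempty set M of edges of Hs and adds
   #|M| edges whose endpoints all lie in the 2#|M| endpoints of M, and these added edges
   must be in G0. A union bound over such pairs gives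
   P <= sum_(i >= 1) 'C(kn, i) 'C(4 i^2, i) (lam/n)^i <= sum_(i >= 1) (64 k lam)^i = O(lam).
   (ii) Second moment. Fix an Hs-neighbour f a of every vertex a. For the ~n^2 pairs
   (a, c) in general position, if {a, c} and {f a, f c} are both edges of G0, then
   trading {a, f a}, {c, f c} for them gives another k-factor. The number X of such
   pairs has E X = Theta(lam^2), while two pairs share a G0-edge only for O(k^2) choices
   of the second, so E X^2 <= E X (E X + C); hence P(X > 0) >= E X / (2 (E X + C)). *)

Lemma leq_expn2r e m1 m2 : m1 <= m2 -> m1 ^ e <= m2 ^ e.
Proof. by case: e => // e; rewrite leq_exp2r. Qed.

Lemma ffact_le_expn n m : n ^_ m <= n ^ m.
Proof.
elim: m => [|m IHm]; first by rewrite ffactn0.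
by rewrite ffactnSr expnSr leq_mul // leq_subr.
Qed.

Lemma expn_subn_le_ffact n m : (n - m) ^ m <= n ^_ m.
Proof.
elim: m => [|m IHm] //; rewrite ffactnSr expnSr leq_mul ?leq_sub2l //.
by apply: leq_trans IHm; rewrite leq_expn2r ?leq_sub2l.
Qed.

Lemma bin_le_exp2 n m : 'C(n, m) <= 2 ^ n.
Proof.
have := cards_draws [set: 'I_n] m; rewrite cardsT card_ord => <-.
rewrite -[n in 2 ^ n]card_ord -cardsT -card_powerset.
by apply: subset_leq_card; apply/subsetP => A; rewrite !inE => /andP[].
Qed.

Lemma bin_fact_le_expn n m : 'C(n, m) * m`! <= n ^ m.
Proof. by rewrite bin_ffact ffact_le_expn. Qed.

(* m^m <= (2m)^_m = 'C(2m, m) m! <= 4^m m! *)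
Lemma expnn_le_fact m : m ^ m <= 4 ^ m * m`!.
Proof.
have -> : 4 ^ m = 2 ^ (m + m) by rewrite expnD -expnMn.
apply: leq_trans (leq_mul (bin_le_exp2 (m + m) m) (leqnn _)).
by rewrite bin_ffact -{1}[m](addnK m) expn_subn_le_ffact.
Qed.

Lemma bin_mul_bin_le a b m : b <= 4 * (m * m) -> 'C(a, m) * 'C(b, m) <= (64 * a) ^ m.
Proof.
move=> le_b; rewrite -(@leq_pmul2r (m`! * m`!)) ?muln_gt0 ?fact_gt0 //.
rewrite mulnACA; apply: leq_trans (leq_mul (bin_fact_le_expn a m) (bin_fact_le_expn b m)) _.
have -> : 64 * a = a * 4 * (4 * 4) by ring.
rewrite !expnMn -!mulnA leq_mul2l; apply/orP; right.
apply: leq_trans (leq_expn2r m le_b) _; rewrite expnMn leq_mul2l; apply/orP; right.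
by rewrite expnMn mulnA mulnACA leq_mul ?expnn_le_fact.
Qed.

Lemma card_bigcup_le (T I : finType) (P : pred I) (F : I -> {set T}) :
  #|\bigcup_(i | P i) F i| <= \sum_(i | P i) #|F i|.
Proof.
elim/big_rec2: _ => [|i A s _ le_As]; first by rewrite cards0.
by apply: leq_trans (leq_of_leqif (leq_card_setU _ _)) _; rewrite leq_add2l.
Qed.

Local Open Scope ring_scope.

Lemma sum_subsets_card (R : pzSemiRingType) (T : finType) (A : {set T}) (g : nat -> R) :
  \sum_(B : {set T} | B \subset A) g #|B| = \sum_(i < #|A|.+1) 'C(#|A|, i)%:R * g i.
Proof.
rewrite (eq_bigr (fun B : {set T} => \sum_(i < #|A|.+1 | #|B| == i) g i)); last first.
  move=> B sBA; have lt_BA : (#|B| < #|A|.+1)%N by rewrite ltnS subset_leq_card.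
  by rewrite (big_pred1 (Ordinal lt_BA)) // => i; rewrite -val_eqE /= eq_sym.
rewrite (exchange_big_dep xpredT) //=; apply: eq_bigr => i _.
rewrite -cards_draws -sumr_const mulr_suml mul1r.
by apply: eq_bigl => B; rewrite inE.
Qed.

Lemma sum_subsets_binomial (R : comPzSemiRingType) (T : finType) (A : {set T}) (x y : R) :
  \sum_(B : {set T} | B \subset A) x ^+ #|B| * y ^+ (#|A| - #|B|) = (x + y) ^+ #|A|.
Proof.
rewrite (sum_subsets_card A (fun i => x ^+ i * y ^+ (#|A| - i))) addrC exprDn.
by apply: eq_bigr => i _; rewrite mulr_natl mulrC.
Qed.

Lemma geometric_sum_le (R : realFieldType) (q : R) m :
  0 <= q -> 2 * q <= 1 -> \sum_(i < m) q ^+ i <= 2.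
Proof.
move=> q_ge0 le_2q; set s := \sum_(i < m) _.
have s_ge0 : 0 <= s by rewrite sumr_ge0 // => i _; rewrite exprn_ge0.
have qm_ge0 : 0 <= q ^+ m by rewrite exprn_ge0.
have : (q - 1) * s = q ^+ m - 1 by rewrite subrX1.
nra.
Qed.

Section RandomGraph.
Variables (R : realType) (n : nat) (p : R).
Local Notation graph := {set {set 'I_n}}.
Implicit Types (S D : graph) (X Y : graph -> R).

Definition gnp_weight S : R := p ^+ #|S| * (1 - p) ^+ (#|edges n| - #|S|).

Definition gnp_expect X : R := \sum_(S : graph | S \subset edges n) gnp_weight S * X S.

Lemma gnp_probE (A : pred graph) :
  gnp_prob p A = gnp_expect (fun S => (A S)%:R).
Proof.
rewrite /gnp_prob /gnp_expect big_mkcondr /=; apply: eq_bigr => S _.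
by case: (A S); rewrite ?mulr1 ?mulr0.
Qed.

Lemma eq_gnp_expect X Y : (forall S, X S = Y S) -> gnp_expect X = gnp_expect Y.
Proof. by move=> eXY; apply: eq_bigr => S _; rewrite eXY. Qed.

Lemma gnp_expect_sum (I : finType) (P : pred I) (X : I -> graph -> R) :
  gnp_expect (fun S => \sum_(i | P i) X i S) = \sum_(i | P i) gnp_expect (X i).
Proof.
rewrite /gnp_expect (eq_bigr (fun S => \sum_(i | P i) gnp_weight S * X i S)).
  by rewrite exchange_big.
by move=> S _; rewrite mulr_sumr.
Qed.

Lemma gnp_expectBZ (a b : R) X Y :
  gnp_expect (fun S => a * X S - b * Y S) = a * gnp_expect X - b * gnp_expect Y.
Proof.
rewrite /gnp_expect (eq_bigr (fun S => a * (gnp_weight S * X S) - b * (gnp_weight S * Y S))).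
  by rewrite big_split /= sumrN !mulr_sumr.
by move=> S _; ring.
Qed.

(* Conditioning on [D] being present leaves a binomial expansion of [(p + (1 - p)) ^ _]
   over the remaining pairs. *)
Lemma gnp_expect_subset D : D \subset edges n ->
  gnp_expect (fun S => (D \subset S)%:R) = p ^+ #|D|.
Proof.
move=> sDE; rewrite /gnp_expect.
rewrite (eq_bigr (fun S : graph => if D \subset S then gnp_weight S else 0)); last first.
  by move=> S _; case: (D \subset S); rewrite ?mulr1 ?mulr0.
rewrite -big_mkcondr /=.
rewrite (reindex_onto (fun S : graph => D :|: S) (fun S : graph => S :\: D)) /=; last first.
  by move=> S /andP[_ sDS]; rewrite setDE setUIr setUCr setIT; apply/setUidPr.
rewrite (eq_bigl (fun S : graph => S \subset edges n :\: D)); last first.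
  move=> S; rewrite subsetD subsetUl andbT subUset sDE /= setDUl setDv set0U.
  by rewrite (sameP eqP setDidPl).
rewrite (eq_bigr (fun S : graph => p ^+ #|D| *
   (p ^+ #|S| * (1 - p) ^+ (#|edges n :\: D| - #|S|)))); last first.
  move=> S; rewrite subsetD => /andP[_ dSD].
  rewrite /gnp_weight cardsU (disjoint_setI0 _) ?cards0 ?subn0; last by rewrite disjoint_sym.
  by rewrite cardsD (setIidPr sDE) subnDA exprD mulrA.
by rewrite -mulr_sumr sum_subsets_binomial addrC subrK expr1n mulr1.
Qed.

Hypotheses (p_ge0 : 0 <= p) (p_le1 : p <= 1).

Lemma gnp_weight_ge0 S : 0 <= gnp_weight S.
Proof. by rewrite mulr_ge0 // exprn_ge0 // subr_ge0. Qed.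

Lemma ler_gnp_expect X Y :
  (forall S, S \subset edges n -> X S <= Y S) -> gnp_expect X <= gnp_expect Y.
Proof. by move=> leXY; apply: ler_sum => S sSE; rewrite ler_wpM2l ?gnp_weight_ge0 ?leXY. Qed.

(* Pointwise [s X - s^2 X^2 / 2 <= 1{A}], optimized at [s = E X / v]. *)
Lemma gnp_prob_ge_second_moment (A : pred graph) X (v : R) :
  (forall S, ~~ A S -> X S = 0) -> 0 < v -> gnp_expect (fun S => X S ^+ 2) <= v ->
  gnp_expect X ^+ 2 / (2 * v) <= gnp_prob p A.
Proof.
move=> X_eq0 v_gt0 le_X2; set m := gnp_expect X; set s := m / v.
have le_ind S : s * X S - s ^+ 2 / 2 * X S ^+ 2 <= (A S)%:R.
  have [_ | /X_eq0 ->] := boolP (A S); last by rewrite mulr0 expr0n mulr0 subrr.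
  by have := sqr_ge0 (s * X S - 1); rewrite /= sqrrB exprMn mulr1 expr1n; nra.
rewrite gnp_probE; apply: le_trans (ler_gnp_expect (fun S _ => le_ind S)).
rewrite gnp_expectBZ -/m.
have -> : m ^+ 2 / (2 * v) = s * m - s ^+ 2 / 2 * v by rewrite /s; field; rewrite gt_eqF.
by rewrite lerD2l lerN2 ler_wpM2l // divr_ge0 ?sqr_ge0.
Qed.

End RandomGraph.

Local Close Scope ring_scope.

Lemma card_incident (T : finType) (H : {set {set T}}) (v : T) :
  #|[set e in H | v \in e]| = \sum_(e in H) (v \in e).
Proof.
rewrite -sum1_card (eq_bigl (fun e => (e \in H) && (v \in e))) => [|e]; last by rewrite inE.
by rewrite big_mkcondr /=; apply: eq_bigr => e _; case: (v \in e).
Qed.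

Section Factors.
Variable n : nat.
Implicit Types (H Hs : {set {set 'I_n}}) (v : 'I_n).

Lemma handshake H : H \subset edges n -> \sum_v #|[set e in H | v \in e]| = 2 * #|H|.
Proof.
move=> sHE; rewrite (eq_bigr _ (fun v _ => card_incident H v)) exchange_big /=.
rewrite (eq_bigr (fun _ => 2)) ?sum_nat_const 1?mulnC // => e eH.
have := subsetP sHE e eH; rewrite inE => /eqP <-.
by rewrite -sum1_card [RHS]big_mkcond /=; apply: eq_bigr => v _; case: (v \in e).
Qed.

Lemma kfactor_handshake k H : is_kfactor k H -> 2 * #|H| = k * n.
Proof.
case/andP=> sHE /forallP degH; rewrite -handshake // -[n in k * n]card_ord mulnC.
by rewrite -sum_nat_const; apply: eq_bigr => v _; apply/eqP.
Qed.

Lemma kfactor_card_eq k H Hs : is_kfactor k H -> is_kfactor k Hs -> #|H| = #|Hs|.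
Proof.
move=> /kfactor_handshake kH /kfactor_handshake kHs.
by apply/eqP; rewrite -(eqn_pmul2l (isT : 0 < 2)) kH kHs.
Qed.

Lemma kfactor_card_le k H : is_kfactor k H -> #|H| <= k * n.
Proof. by move=> /kfactor_handshake kH; rewrite -kH leq_pmull. Qed.

End Factors.

Section FirstMoment.
Variables (R : realType) (n k : nat) (Hs : {set {set 'I_n}}).
Hypothesis kHs : is_kfactor k Hs.
Local Notation graph := {set {set 'I_n}}.

Definition pairs_within (M : graph) : graph := [set e in edges n | e \subset cover M].

Lemma card_pairs_within (M : graph) : M \subset edges n ->
  #|pairs_within M| <= 4 * (#|M| * #|M|).
Proof.
move=> sME.
have -> : #|pairs_within M| = 'C(#|cover M|, 2).
  by rewrite -cards_draws; apply: eq_card => e; rewrite !inE andbC.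
have le_cover : #|cover M| <= 2 * #|M|.
  apply: leq_trans (leq_of_leqif (leq_card_cover M)) _.
  rewrite (eq_bigr (fun _ => 2)) ?sum_nat_const 1?mulnC // => e eM.
  by have := subsetP sME e eM; rewrite inE => /eqP.
apply: leq_trans (leq_bin2l 2 le_cover) _.
apply: leq_trans (leq_trans _ (bin_fact_le_expn (2 * #|M|) 2)) _.
  by rewrite leq_pmulr.
by rewrite expnMn mulnn.
Qed.

Lemma other_kfactor_exchange H : is_kfactor k H -> H != Hs ->
  [/\ Hs :\: H \subset Hs, 0 < #|Hs :\: H|,
      H :\: Hs \subset pairs_within (Hs :\: H) & #|H :\: Hs| = #|Hs :\: H|].
Proof.
move=> kH neq_H; have card_HHs := kfactor_card_eq kH kHs.
have card_D : #|H :\: Hs| = #|Hs :\: H| by rewrite !cardsD setIC card_HHs.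
move: (kHs) (kH) => /andP[sHsE /forallP degHs] /andP[sHE /forallP degH].
split=> //; first exact: subsetDl.
- rewrite lt0n cards_eq0 setD_eq0; apply: contra neq_H => sHsH.
  by rewrite eq_sym eqEcard sHsH card_HHs leqnn.
apply/subsetP => e /setDP[eH eNHs]; rewrite inE (subsetP sHE e eH) /=.
apply/subsetP => v ve; apply/bigcupP.
have [[e' e'D ve']|no_e'] := altP (@exists_inP _ (mem (Hs :\: H)) (fun e' => v \in e')).
  by exists e'.
have sub_inc : [set e' in Hs | v \in e'] \subset [set e' in H | v \in e'].
  apply/subsetP => e'; rewrite !inE => /andP[e'Hs ve']; rewrite ve' andbT.
  by apply: contraR no_e' => e'NH; apply/exists_inP; exists e' => //; apply/setDP.
have eq_inc : [set e' in Hs | v \in e'] = [set e' in H | v \in e'].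
  by apply/eqP; rewrite eqEcard sub_inc /=; move: (degH v) (degHs v) => /eqP -> /eqP ->.
have : e \in [set e' in H | v \in e'] by rewrite inE eH ve.
by rewrite -eq_inc inE (negbTE eNHs).
Qed.

Local Open Scope ring_scope.

Definition edge_exchange (w : graph * graph) : bool :=
  ((w.1 \subset Hs) && (0 < #|w.1|)%N) &&
  ((w.2 \subset pairs_within w.1) && (#|w.2| == #|w.1|)).

Lemma other_kfactor_le_exchanges (S : graph) :
  (other_kfactor k Hs S)%:R <= \sum_(w | edge_exchange w) ((w.2 \subset S)%:R : R).
Proof.
have [/existsP[H /and3P[kH neq_H sHG]]|_] := boolP (other_kfactor k Hs S); last first.
  by rewrite sumr_ge0 // => w _; rewrite ler0n.
have [sDHs DHs_gt0 sAD card_AD] := other_kfactor_exchange kH neq_H.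
rewrite (bigD1 (Hs :\: H, H :\: Hs)) /=; last by rewrite /edge_exchange sDHs DHs_gt0 sAD card_AD /=.
have -> : H :\: Hs \subset S.
  apply/subsetP => e /setDP[eH eNHs]; move: (subsetP sHG e eH).
  by rewrite inE (negbTE eNHs) orbF.
by rewrite lerDl sumr_ge0 // => w _; rewrite ler0n.
Qed.

Lemma gnp_other_kfactor_le_sum (p : R) : 0 <= p -> p <= 1 ->
  gnp_prob p (other_kfactor k Hs) <=
  \sum_(M : graph | (M \subset Hs) && (0 < #|M|)%N) 'C(4 * (#|M| * #|M|), #|M|)%:R * p ^+ #|M|.
Proof.
move=> p_ge0 p_le1; have sHsE : Hs \subset edges n by case/andP: kHs.
rewrite gnp_probE.
apply: le_trans (ler_gnp_expect p_ge0 p_le1 (fun S _ => other_kfactor_le_exchanges S)) _.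
rewrite gnp_expect_sum (eq_bigr (fun w : graph * graph => p ^+ #|w.1|)); last first.
  move=> w /andP[_ /andP[sAD /eqP <-]]; rewrite gnp_expect_subset //.
  by apply: subset_trans sAD _; apply/subsetP => e; rewrite inE => /andP[].
rewrite -(pair_big_dep (fun M : graph => (M \subset Hs) && (0 < #|M|)%N)
  (fun M A : graph => (A \subset pairs_within M) && (#|A| == #|M|)) (fun M _ => p ^+ #|M|)) /=.
apply: ler_sum => M /andP[sMHs _].
rewrite (eq_bigl (fun A => A \in [set A : graph | A \subset pairs_within M & #|A| == #|M|]));
  last by move=> A; rewrite inE.
rewrite sumr_const cards_draws -[X in X <= _]mulr_natl ler_wpM2r ?exprn_ge0 // ler_nat.
by rewrite leq_bin2l // card_pairs_within // (subset_trans sMHs sHsE).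
Qed.

Lemma bin_mul_bin_expr_le a m (q : R) : 0 <= q ->
  ('C(a, m) * 'C(4 * (m * m), m))%:R * q ^+ m <= (64 * a%:R * q) ^+ m.
Proof.
move=> q_ge0; rewrite exprMn ler_wpM2r ?exprn_ge0 //.
by rewrite -natrM -natrX ler_nat bin_mul_bin_le.
Qed.

Lemma gnp_other_kfactor_le (lam : R) : (0 < n)%N -> 0 <= lam <= n%:R ->
  2 * (64 * k%:R * lam) <= 1 ->
  gnp_prob (lam / n%:R) (other_kfactor k Hs) <= 2 * (64 * k%:R * lam).
Proof.
move=> n_gt0 /andP[lam_ge0 lam_len] small; set q := 64 * k%:R * lam.
have n_pos : 0 < n%:R :> R by rewrite ltr0n.
have p_ge0 : 0 <= lam / n%:R by rewrite divr_ge0 // ltW.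
have p_le1 : lam / n%:R <= 1 by rewrite ler_pdivrMr // mul1r.
have q_ge0 : 0 <= q by rewrite !mulr_ge0.
apply: le_trans (gnp_other_kfactor_le_sum p_ge0 p_le1) _.
rewrite big_mkcondr /= (sum_subsets_card Hs
  (fun i => if (0 < i)%N then 'C(4 * (i * i), i)%:R * (lam / n%:R) ^+ i else 0)).
rewrite big_ord_recl /= mulr0 add0r.
apply: le_trans (_ : \sum_(i < #|Hs|) q * q ^+ i <= _); last first.
  by rewrite -mulr_sumr mulrC ler_wpM2r ?geometric_sum_le.
apply: ler_sum => i _; rewrite mulrA -natrM -exprS.
apply: le_trans (bin_mul_bin_expr_le _ _ p_ge0) _.
have le_q : 64 * #|Hs|%:R * (lam / n%:R) <= q.
  rewrite /q -!mulrA ler_wpM2l // mulrA ler_pdivrMr // mulrAC ler_wpM2r //.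
  by rewrite -natrM ler_nat kfactor_card_le.
by rewrite lerXn2r ?nnegrE // mulr_ge0 // mulr_ge0.
Qed.

End FirstMoment.

Lemma card_incident_pair (T : finType) (x y : {set T}) (v : T) : x != y ->
  #|[set e in [set x; y] | v \in e]| = (v \in x) + (v \in y).
Proof.
by move=> neq_xy; rewrite card_incident big_setU1 ?inE //= big_set1.
Qed.

Lemma card_incident_exchange (T : finType) (H M A : {set {set T}}) (v : T) :
  M \subset H -> [disjoint A & H] ->
  #|[set e in M | v \in e]| = #|[set e in A | v \in e]| ->
  #|[set e in (H :\: M) :|: A | v \in e]| = #|[set e in H | v \in e]|.
Proof.
pose inc (G : {set {set T}}) := [set e in G | v \in e]; rewrite -/(inc M) -/(inc A) -/(inc H).
rewrite -/(inc ((H :\: M) :|: A)) => sMH dAH eq_deg.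
have -> : inc ((H :\: M) :|: A) = (inc H :\: inc M) :|: inc A.
  apply/setP => e; rewrite !inE.
  by case: (e \in H); case: (e \in M); case: (e \in A); case: (v \in e).
have sMH_v : inc M \subset inc H.
  by apply/subsetP => e; rewrite !inE => /andP[/(subsetP sMH) -> ->].
rewrite cardsU.
have -> : (inc H :\: inc M) :&: inc A = set0.
  apply/setP => e; rewrite !inE; case eA: (e \in A); rewrite ?andbF //=.
  by rewrite (disjointFr dAH eA) !andbF.
rewrite cards0 subn0 cardsD (setIidPr sMH_v) -eq_deg subnK //.
exact: subset_leq_card.
Qed.

(* Degrees in the 4-cycle a - b - d - c - a, computed from either perfect matching. *)
Lemma eq_cycle4_incidence (T : eqType) (v a b c d : T) :
  a != b -> c != d -> a != c -> b != d ->
  ((v == a) || (v == b)) + ((v == c) || (v == d)) =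
  ((v == a) || (v == c)) + ((v == b) || (v == d)).
Proof.
have not_both x y : x != y -> ~~ ((v == x) && (v == y)).
  by move=> neq_xy; apply: contra neq_xy => /andP[/eqP <- /eqP <-].
have orb_add (x y : bool) : ~~ (x && y) -> x || y = x + y :> nat by case: x; case: y.
by move=> ab cd ac bd; rewrite !orb_add ?not_both // addnACA.
Qed.

Section Switching.
Variables (n k : nat) (Hs : {set {set 'I_n}}) (f : 'I_n -> 'I_n).
Hypotheses (kHs : is_kfactor k Hs) (edge_f : forall a, [set a; f a] \in Hs).
Local Notation graph := {set {set 'I_n}}.
Implicit Types (a c u v : 'I_n) (ac : 'I_n * 'I_n).

Let sHsE : Hs \subset edges n. Proof. by case/andP: kHs. Qed.

Lemma edge_neq u v : [set u; v] \in Hs -> u != v.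
Proof. by move=> /(subsetP sHsE); rewrite inE cards2; case: (u != v). Qed.

Lemma neq_f a : a != f a. Proof. exact: edge_neq (edge_f a). Qed.

Definition nbr v : {set 'I_n} := [set u | [set u; v] \in Hs].

Lemma card_nbr v : #|nbr v| <= k.
Proof.
case/andP: kHs => _ /forallP/(_ v)/eqP <-.
have inj_edge : {in nbr v &, injective (fun u => [set u; v])}.
  move=> u u'; rewrite !inE => uv_Hs _ eq_uu'.
  have : u \in [set u'; v] by rewrite -eq_uu' !inE eqxx.
  rewrite !inE => /orP[/eqP // | /eqP eq_uv].
  by move: (edge_neq uv_Hs); rewrite eq_uv eqxx.
rewrite -(card_in_imset inj_edge); apply: subset_leq_card.
by apply/subsetP => e /imsetP[u]; rewrite inE => uv_Hs ->; rewrite inE uv_Hs !inE eqxx orbT.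
Qed.

Lemma card_preimset_f (X : {set 'I_n}) : #|f @^-1: X| <= k * #|X|.
Proof.
have sub_nbr : f @^-1: X \subset \bigcup_(u in X) nbr u.
  by apply/subsetP => c; rewrite inE => fcX; apply/bigcupP; exists (f c); rewrite ?inE.
apply: leq_trans (subset_leq_card sub_nbr) _; apply: leq_trans (card_bigcup_le _ _) _.
by rewrite mulnC -sum_nat_const; apply: leq_sum => u _; apply: card_nbr.
Qed.

(* Switching along the 4-cycle a - f a - f c - c - a: the Hs-edges {a, f a}, {c, f c}
   are traded for the non-edges {a, c}, {f a, f c}. *)
Definition switchable ac : bool :=
  [&& ac.1 != ac.2, ac.1 != f ac.2, ac.2 != f ac.1, f ac.1 != f ac.2,
      [set ac.1; ac.2] \notin Hs & [set f ac.1; f ac.2] \notin Hs].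

Definition switch_in ac : graph := [set [set ac.1; ac.2]; [set f ac.1; f ac.2]].

Definition switch_out ac : graph := [set [set ac.1; f ac.1]; [set ac.2; f ac.2]].

Definition switch ac : graph := (Hs :\: switch_out ac) :|: switch_in ac.

Lemma switch_in_subset ac : switchable ac -> switch_in ac \subset edges n.
Proof.
case: ac => a c /and3P[ac afc /and4P[_ fafc _ _]].
by apply/subsetP => e; rewrite !inE => /orP[] /eqP ->; rewrite cards2 ?ac ?fafc.
Qed.

Lemma switch_in_neq a c : a != f c -> [set a; c] != [set f a; f c].
Proof.
move=> afc; apply: contraNneq (neq_f a) => eq_in.
have : a \in [set f a; f c] by rewrite -eq_in !inE eqxx.
by rewrite !inE (negbTE afc) orbF.
Qed.

Lemma card_switch_in ac : switchable ac -> #|switch_in ac| = 2.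
Proof. by case: ac => a c /and3P[_ afc _]; rewrite cards2 switch_in_neq. Qed.

Lemma switch_kfactor ac : switchable ac -> is_kfactor k (switch ac).
Proof.
move=> sw_ac; have sInE := switch_in_subset sw_ac.
case: ac sw_ac sInE => a c /and3P[ac afc /and4P[_ fafc aNc faNfc]] sInE.
rewrite /is_kfactor subUset sInE (subset_trans (subsetDl _ _) sHsE) /=.
case/andP: kHs => _ /forallP degHs; apply/forallP => v.
have out_neq : [set a; f a] != [set c; f c].
  apply: contraNneq ac => eq_out; have : a \in [set c; f c] by rewrite -eq_out !inE eqxx.
  by rewrite !inE (negbTE afc) orbF.
rewrite card_incident_exchange //.
- by apply/subsetP => e; rewrite !inE => /orP[] /eqP ->.
- by rewrite disjoints_subset; apply/subsetP => e; rewrite !inE => /orP[] /eqP ->.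
rewrite card_incident_pair // card_incident_pair ?switch_in_neq // !inE.
exact: eq_cycle4_incidence (neq_f a) (neq_f c) ac fafc.
Qed.

Lemma switch_neq ac : switchable ac -> switch ac != Hs.
Proof.
case: ac => a c /and3P[_ _ /and4P[_ _ aNc _]]; apply: contraNneq aNc => <-.
by rewrite !inE eqxx orbT.
Qed.

Lemma other_kfactor_switch_in ac (S : graph) : switchable ac ->
  switch_in ac \subset S -> other_kfactor k Hs S.
Proof.
move=> sw_ac sInS; apply/existsP; exists (switch ac).
rewrite switch_kfactor // switch_neq //=; apply/subsetP => e /setUP[/setDP[eHs _] | eIn].
  by rewrite inE eHs orbT.
by rewrite inE (subsetP sInS e eIn).
Qed.

Definition switch_bound := 2 + k + (k + k * k).

Lemma not_switchable_subset a : [set c | ~~ switchable (a, c)] \subset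
  ([set a; f a] :|: nbr a) :|: (nbr (f a) :|: f @^-1: nbr (f a)).
Proof.
apply/subsetP => c; rewrite !inE; apply: contraR.
move=> /norP[/norP[/norP[ca cfa] cNa] /norP[cNfa fcNfa]].
rewrite /switchable /= eq_sym ca cfa [[set a; c]]setUC cNa [[set f a; f c]]setUC fcNfa /=.
by rewrite andbT; apply/andP; split; [apply: contraNneq cNa | apply: contraNneq cNfa] => ->.
Qed.

Lemma card_switchable_row a : n - switch_bound <= #|[set c | switchable (a, c)]|.
Proof.
have -> : #|[set c | switchable (a, c)]| = n - #|[set c | ~~ switchable (a, c)]|.
  rewrite (cardsCs [set c | switchable (a, c)]) card_ord; congr (_ - _).
  by apply: eq_card => c; rewrite !inE.
apply: leq_sub2l; apply: leq_trans (subset_leq_card (not_switchable_subset a)) _.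
apply: leq_trans (leq_of_leqif (leq_card_setU _ _)) (leq_add _ _).
  apply: leq_trans (leq_of_leqif (leq_card_setU _ _)) (leq_add _ (card_nbr _)).
  by rewrite cards2; case: (a != f a).
apply: leq_trans (leq_of_leqif (leq_card_setU _ _)) (leq_add (card_nbr _) _).
by apply: leq_trans (card_preimset_f _) _; rewrite leq_mul2l card_nbr orbT.
Qed.

Lemma card_switchable : n * (n - switch_bound) <= #|[set ac | switchable ac]|.
Proof.
have -> : #|[set ac | switchable ac]| = \sum_a #|[set c | switchable (a, c)]|.
  rewrite -sum1_card (eq_bigl (fun ac => xpredT ac.1 && switchable (ac.1, ac.2))) => [|[a c]];
    last by rewrite inE.
  rewrite -(pair_big_dep xpredT (fun a c => switchable (a, c)) (fun _ _ => 1)) /=.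
  by apply: eq_bigr => a _; rewrite -sum1_card; apply: eq_bigl => c; rewrite inE.
rewrite -[n in n * _]card_ord -sum_nat_const; apply: leq_sum => a _.
exact: card_switchable_row.
Qed.

Definition switch_vertices ac : {set 'I_n} := [set ac.1; ac.2] :|: [set f ac.1; f ac.2].

Definition switch_span ac : {set 'I_n} := switch_vertices ac :|: f @^-1: switch_vertices ac.

Lemma card_switch_span ac : #|switch_span ac| <= 4 + 4 * k.
Proof.
have card_V : #|switch_vertices ac| <= 4.
  apply: leq_trans (leq_of_leqif (leq_card_setU _ _)) _.
  by rewrite !cards2; case: (ac.1 != ac.2); case: (f ac.1 != f ac.2).
apply: leq_trans (leq_of_leqif (leq_card_setU _ _)) (leq_add card_V _).
by apply: leq_trans (card_preimset_f _) _; rewrite mulnC leq_mul2r card_V orbT.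
Qed.

Lemma switch_in_meet ac bd : ~~ [disjoint switch_in ac & switch_in bd] ->
  (bd.1 \in switch_span ac) && (bd.2 \in switch_span ac).
Proof.
rewrite -setI_eq0 => /set0Pn[e /setIP[e_ac e_bd]].
have sEV : e \subset switch_vertices ac.
  by case/set2P: e_ac => ->; [apply: subsetUl | apply: subsetUr].
have in_span x : x \in switch_vertices ac -> x \in switch_span ac by move=> xV; apply/setUP; left.
have in_span_f x : f x \in switch_vertices ac -> x \in switch_span ac.
  by move=> fxV; apply/setUP; right; rewrite in_set.
case/set2P: e_bd => e_eq.
  by rewrite !in_span // (subsetP sEV) // e_eq !inE eqxx ?orbT.
by rewrite !in_span_f // (subsetP sEV) // e_eq !inE eqxx ?orbT.
Qed.

Definition overlapping ac : {set 'I_n * 'I_n} :=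
  [set bd | switchable bd && ~~ [disjoint switch_in ac & switch_in bd]].

Lemma card_overlapping ac : #|overlapping ac| <= (4 + 4 * k) * (4 + 4 * k).
Proof.
have sub_span : overlapping ac \subset setX (switch_span ac) (switch_span ac).
  by apply/subsetP => -[b d]; rewrite in_set in_setX => /andP[_ /switch_in_meet].
by apply: leq_trans (subset_leq_card sub_span) _; rewrite cardsX leq_mul ?card_switch_span.
Qed.

End Switching.

Local Open Scope ring_scope.

Section SecondMoment.
Variables (R : realType) (n k : nat) (Hs : {set {set 'I_n}}) (f : 'I_n -> 'I_n).
Hypotheses (kHs : is_kfactor k Hs) (edge_f : forall a, [set a; f a] \in Hs).
Variable p : R.
Hypotheses (p_ge0 : 0 <= p) (p_le1 : p <= 1).
Local Notation graph := {set {set 'I_n}}.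
Local Notation switches := [set ac | switchable Hs f ac].

Definition overlap_const : R := ((4 + 4 * k) * (4 + 4 * k))%:R.

Definition switch_count (S : graph) : R := \sum_(ac in switches) (switch_in f ac \subset S)%:R.

Lemma switch_count_eq0 S : ~~ other_kfactor k Hs S -> switch_count S = 0.
Proof.
move=> noS; rewrite /switch_count big1 // => ac; rewrite inE => sw_ac.
case: (boolP (switch_in f ac \subset S)) => // sInS.
by rewrite (other_kfactor_switch_in kHs edge_f sw_ac sInS) in noS.
Qed.

Lemma gnp_expect_switch_count : gnp_expect p switch_count = #|switches|%:R * p ^+ 2.
Proof.
rewrite gnp_expect_sum (eq_bigr (fun _ => p ^+ 2)) ?sumr_const ?mulr_natl // => ac.
rewrite inE => sw_ac.
by rewrite gnp_expect_subset ?(card_switch_in kHs edge_f sw_ac) // (switch_in_subset sw_ac).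
Qed.

Lemma gnp_expect_switch_count_sq : gnp_expect p (fun S => switch_count S ^+ 2) <=
  #|switches|%:R * (#|switches|%:R * p ^+ 4 + overlap_const * p ^+ 2).
Proof.
have sq_sum S : switch_count S ^+ 2 =
    \sum_(ac in switches) \sum_(bd in switches) (switch_in f ac :|: switch_in f bd \subset S)%:R.
  rewrite /switch_count expr2 mulr_suml; apply: eq_bigr => ac _.
  by rewrite mulr_sumr; apply: eq_bigr => bd _; rewrite subUset -mulnb natrM.
rewrite (eq_gnp_expect p sq_sum) gnp_expect_sum mulr_natl -sumr_const.
apply: ler_sum => ac; rewrite inE => sw_ac; rewrite gnp_expect_sum.
rewrite (eq_bigr (fun bd => p ^+ #|switch_in f ac :|: switch_in f bd|)) => [|bd]; last first.
  rewrite inE => sw_bd; rewrite gnp_expect_subset // subUset.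
  by rewrite (switch_in_subset sw_ac) (switch_in_subset sw_bd).
rewrite (bigID (fun bd => [disjoint switch_in f ac & switch_in f bd])) /= lerD //.
  rewrite big_mkcondr mulr_natl -sumr_const /=; apply: ler_sum => bd; rewrite inE => sw_bd.
  case: ifP => [disj | _]; last exact: exprn_ge0.
  by rewrite cardsU (disjoint_setI0 disj) cards0 subn0 !(card_switch_in kHs edge_f).
apply: (@le_trans _ _ (\sum_(bd in overlapping Hs f ac) p ^+ 2)).
  rewrite [X in _ <= X](eq_bigl (fun bd =>
    (bd \in switches) && ~~ [disjoint switch_in f ac & switch_in f bd])) => [|bd];
    last by rewrite !inE.
  apply: ler_sum => bd /andP[sw_bd _]; rewrite ler_wiXn2l //.
  by rewrite -(card_switch_in kHs edge_f sw_ac) subset_leq_card // subsetUl.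
by rewrite sumr_const -mulr_natl ler_wpM2r ?exprn_ge0 // ler_nat card_overlapping.
Qed.

Lemma overlap_const_gt0 : 0 < overlap_const.
Proof. by rewrite ltr0n muln_gt0 addn_gt0. Qed.

Lemma gnp_other_kfactor_ge (x := #|switches|%:R * p ^+ 2) : 0 < x ->
  x / (2 * (x + overlap_const)) <= gnp_prob p (other_kfactor k Hs).
Proof.
move=> x_gt0; have xC_gt0 : 0 < x + overlap_const by rewrite addr_gt0 ?overlap_const_gt0.
have le_sq : gnp_expect p (fun S => switch_count S ^+ 2) <= x * (x + overlap_const).
  suff -> : x * (x + overlap_const) =
      #|switches|%:R * (#|switches|%:R * p ^+ 4 + overlap_const * p ^+ 2).
    exact: gnp_expect_switch_count_sq.
  by rewrite /x; ring.
have := gnp_prob_ge_second_moment p_ge0 p_le1 switch_count_eq0 (mulr_gt0 x_gt0 xC_gt0) le_sq.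
suff -> : x / (2 * (x + overlap_const)) = x ^+ 2 / (2 * (x * (x + overlap_const))).
  by rewrite gnp_expect_switch_count.
by move: overlap_const xC_gt0 => C xC_gt0; field; rewrite !gt_eqF.
Qed.

End SecondMoment.

Lemma kfactor_mate n k (Hs : {set {set 'I_n}}) : (0 < k)%N -> is_kfactor k Hs ->
  exists f : 'I_n -> 'I_n, forall a, [set a; f a] \in Hs.
Proof.
move=> k_gt0 /andP[sHsE /forallP degHs].
apply: (@fin_all_exists _ (fun _ => 'I_n) (fun a b => [set a; b] \in Hs)) => a.
have : (0 < #|[set e in Hs | a \in e]|)%N by rewrite (eqP (degHs a)).
rewrite card_gt0 => /set0Pn[e]; rewrite inE => /andP[eHs ae].
have /cards2P[x [y [_ exy]]] : #|e| == 2 by move: (subsetP sHsE e eHs); rewrite inE.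
move: ae eHs; rewrite exy !inE => /orP[] /eqP ->; first by exists y.
by exists x; rewrite setUC.
Qed.

Lemma ler_half_ratio (R : realFieldType) (x0 x C : R) : 0 < x0 -> x0 <= x -> 0 < C ->
  x0 / (2 * (x0 + C)) <= x / (2 * (x + C)).
Proof.
move=> x0_gt0 le_x0x C_gt0; have x_gt0 := lt_le_trans x0_gt0 le_x0x.
rewrite ler_pdivrMr ?mulr_gt0 ?addr_gt0 // mulrAC ler_pdivlMr ?mulr_gt0 ?addr_gt0 //.
nra.
Qed.

Lemma half_sqr_le_density (R : realFieldType) (n K : nat) (c0 lam : R) :
  (2 * K <= n)%N -> (0 < n)%N -> 0 <= c0 <= lam ->
  c0 ^+ 2 / 2 <= (n * (n - K))%:R * (lam / n%:R) ^+ 2.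
Proof.
move=> le_2K n_gt0 /andP[c0_ge0 le_c0]; have n_pos : 0 < n%:R :> R by rewrite ltr0n.
have le_n : n%:R <= 2 * (n - K)%:R :> R by rewrite -natrM ler_nat; lia.
have nK_ge0 : 0 <= (n - K)%:R :> R by [].
have le_sqr : c0 ^+ 2 <= lam ^+ 2 by rewrite lerXn2r ?nnegrE // (le_trans c0_ge0).
have c02_ge0 : 0 <= c0 ^+ 2 by rewrite sqr_ge0.
have -> : (n * (n - K))%:R * (lam / n%:R) ^+ 2 = (n - K)%:R * lam ^+ 2 / n%:R.
  by rewrite natrM; field; rewrite gt_eqF.
rewrite ler_pdivlMr //; nra.
Qed.

Lemma sparse_planted_kfactor_unique (R : realType) (k : nat) (lam : nat -> R) :
  (0 < k)%N -> (forall n : nat, 0 <= lam n <= n%:R) ->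
  (forall eps : R, 0 < eps -> exists N : nat, forall n : nat, (N <= n)%N -> lam n <= eps) ->
  forall eps : R, 0 < eps ->
    exists N : nat, forall (n : nat) (Hs : {set {set 'I_n}}),
      (N <= n)%N -> is_kfactor k Hs -> gnp_prob (lam n / n%:R) (other_kfactor k Hs) <= eps.
Proof.
move=> k_gt0 lam_range lam_small eps eps_gt0; set e := Num.min eps 1.
have e_gt0 : 0 < e by rewrite lt_min eps_gt0 ltr01.
have c_gt0 : 0 < 128 * k%:R :> R by rewrite mulr_gt0 ?ltr0n.
have [N lamN] := lam_small (e / (128 * k%:R)) (divr_gt0 e_gt0 c_gt0).
exists (maxn N 1) => n Hs; rewrite geq_max => /andP[le_Nn n_gt0] kHs.
have le_e : 2 * (64 * k%:R * lam n) <= e.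
  by move: (lamN n le_Nn); rewrite ler_pdivlMr // => le_lam; apply: le_trans le_lam; lra.
apply: le_trans (gnp_other_kfactor_le kHs n_gt0 (lam_range n) _) _.
  by apply: le_trans le_e _; rewrite ge_min lexx orbT.
by apply: le_trans le_e _; rewrite ge_min lexx.
Qed.

Lemma dense_planted_other_kfactor (R : realType) (k : nat) (lam : nat -> R) :
  (0 < k)%N -> (forall n : nat, 0 <= lam n <= n%:R) ->
  (exists c0 : R, 0 < c0 /\ exists N : nat, forall n : nat, (N <= n)%N -> c0 <= lam n) ->
  exists c : R, 0 < c /\
    exists N : nat, forall (n : nat) (Hs : {set {set 'I_n}}),
      (N <= n)%N -> is_kfactor k Hs -> c <= gnp_prob (lam n / n%:R) (other_kfactor k Hs).
Proof.
move=> k_gt0 lam_range [c0 [c0_gt0 [N0 lamN0]]]; set x0 := c0 ^+ 2 / 2.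
have x0_gt0 : 0 < x0 by rewrite divr_gt0 // exprn_gt0.
have C_gt0 := overlap_const_gt0 R k.
exists (x0 / (2 * (x0 + overlap_const R k))).
split; first by rewrite divr_gt0 // mulr_gt0 // addr_gt0.
exists (maxn N0 (maxn (2 * switch_bound k) 1)) => n Hs.
rewrite !geq_max => /and3P[le_N0n le_2K n_gt0] kHs; have [f edge_f] := kfactor_mate k_gt0 kHs.
have /andP[lam_ge0 lam_len] := lam_range n; have n_pos : 0 < n%:R :> R by rewrite ltr0n.
have p_ge0 : 0 <= lam n / n%:R by rewrite divr_ge0 // ltW.
have p_le1 : lam n / n%:R <= 1 by rewrite ler_pdivrMr // mul1r.
have le_x0 : x0 <= #|[set ac | switchable Hs f ac]|%:R * (lam n / n%:R) ^+ 2.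
  have c0_range : 0 <= c0 <= lam n by rewrite ltW ?lamN0.
  apply: le_trans (half_sqr_le_density le_2K n_gt0 c0_range) _.
  by rewrite ler_wpM2r ?exprn_ge0 // ler_nat card_switchable.
apply: le_trans (gnp_other_kfactor_ge kHs edge_f p_ge0 p_le1 (lt_le_trans x0_gt0 le_x0)).
exact: ler_half_ratio.
Qed.

Theorem mainTheorem2 (R : realType) (k : nat) (lam : nat -> R) :
  (0 < k)%N ->
  (forall n : nat, 0 <= lam n <= n%:R) ->
  (* (i) lambda = o(1) *)
  ((forall eps : R, 0 < eps ->
      exists N : nat, forall n : nat, (N <= n)%N -> lam n <= eps) ->
   forall eps : R, 0 < eps ->
     exists N : nat, forall (n : nat) (Hs : {set {set 'I_n}}),
       (N <= n)%N -> is_kfactor k Hs ->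
       gnp_prob (lam n / n%:R) (other_kfactor k Hs) <= eps)
  /\
  (* (ii) lambda = Omega(1) *)
  ((exists c0 : R, 0 < c0 /\
      exists N : nat, forall n : nat, (N <= n)%N -> c0 <= lam n) ->
   exists c : R, 0 < c /\
     exists N : nat, forall (n : nat) (Hs : {set {set 'I_n}}),
       (N <= n)%N -> is_kfactor k Hs ->
       c <= gnp_prob (lam n / n%:R) (other_kfactor k Hs)).
Proof.
move=> k_gt0 lam_range; split.
  exact: sparse_planted_kfactor_unique.
exact: dense_planted_other_kfactor.
Qed.
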